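(* For every integer $j\ge 0$, $f^*(3j+1,2)=2j+1$.
   Context: For integers $d\ge 1$, $n\ge 1$, the triangular grid is $T_d(n)=\{(x_1,\dots,x_d)\in\mathbb{Z}_{\ge 0}^d : x_1+\dots+x_d\le n-1\}$. A fractional cover of $T_d(n)$ is an assignment of nonnegative weights $w(H)$ to affine hyperplanes $H$ of $\mathbb{R}^d$ (only finitely many nonzero) such that $\sum_{H\ni p} w(H)\ge 1$ for every $p\in T_d(n)$. $f^*(n,d)$ denotes the minimum of $\sum_H w(H)$ over all fractional covers of $T_d(n)$. For $d=2$, hyperplanes are lines. *)

From HB Require Import structures.
From mathcomp Require Import all_boot all_order all_algebra.
From mathcomp Require Import reals.
Set Implicit Arguments. Unset Strict Implicit. Unset Printing Implicit Defensive.
Import Order.TTheory GRing.Theory Num.Theory.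
Local Open Scope ring_scope.

Section FracCover.
Variable R : realType.

(* An affine hyperplane of R^d is given by data (a, c) with a != 0:
   H = { x | sum_i a_i x_i = c }. *)
Definition on_hyp (d : nat) (h : 'rV[R]_d * R) (x : 'rV[R]_d) : bool :=
  \sum_(i < d) h.1 0 i * x 0 i == h.2.

Definition grid_pt (d : nat) (p : 'I_d -> nat) : 'rV[R]_d := \row_i (p i)%:R.

Definition in_Tdn (d n : nat) (p : 'I_d -> nat) : bool :=
  (\sum_(i < d) p i <= n - 1)%N.

(* A finitely supported weighting of hyperplanes, as a finite list of
   entries ((a, c), w): hyperplane {a.x = c} (a != 0) with weight w >= 0.
   (Repeated hyperplanes just add their weights.) *)
Definition frac_cover (d n : nat) (s : seq ('rV[R]_d * R * R)) : Prop :=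
  (forall e, e \in s -> e.1.1 != 0 /\ 0 <= e.2) /\
  (forall p : 'I_d -> nat, in_Tdn n p ->
     1 <= \sum_(e <- s | on_hyp e.1 (grid_pt p)) e.2).

Definition cover_weight (d : nat) (s : seq ('rV[R]_d * R * R)) : R :=
  \sum_(e <- s) e.2.

Definition is_fstar (n d : nat) (v : R) : Prop :=
  (exists s, @frac_cover d n s /\ @cover_weight d s = v) /\
  (forall s, @frac_cover d n s -> v <= @cover_weight d s).

End FracCover.

From HB Require Import structures.
From mathcomp Require Import all_boot all_order all_algebra.
From mathcomp Require Import reals.
From mathcomp Require Import zify ring.
Set Implicit Arguments. Unset Strict Implicit. Unset Printing Implicit Defensive.
Import Order.TTheory GRing.Theory Num.Theory.

(* Upper bound: take the three pencils of lines parallel to the sides of the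
   triangle, [x = t], [y = t] and [x + y = 3j - t] for [t < 2j], each with
   weight [(2j - t)/(3j)].  A point with barycentric coordinates [a, b, c]
   ([a + b + c = 3j]) is covered with weight at least
   [((2j - a) + (2j - b) + (2j - c))/(3j) = 1], for a total weight [2j + 1].

   Lower bound, by LP duality: give each lattice point of the hexagon
   [a, b, c <= 2j] the weight [max(|a - j|, |b - j|, |c - j|)/(j(j+1))], its
   hexagonal distance to the centre.  Each row of the hexagon carries weight
   exactly 1, so by symmetry every line parallel to a side carries at most 1.
   On any other line, two lattice points differ by at least 2 in one fixed
   barycentric coordinate, so the line meets at most [j + 1] points of the
   hexagon, each of weight at most [1/(j+1)].  The total weight is [2j + 1]. *)

Definition natdist (m n : nat) : nat := (m - n) + (n - m).

Definition in_hexagon (j a b : nat) : bool :=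
  [&& a + b <= 3 * j, a <= 2 * j, b <= 2 * j & j <= a + b].

(* [3 * j - a - b] is the third barycentric coordinate of [(a, b)]. *)
Definition hexdist (j a b : nat) : nat :=
  maxn (maxn (natdist a j) (natdist b j)) (natdist (3 * j - a - b) j).

Definition hexw (j a b : nat) : nat := if in_hexagon j a b then hexdist j a b else 0.

Ltac hexw_lia :=
  rewrite /hexw /in_hexagon /hexdist /natdist;
  case: ifP => [/and4P[? ? ? ?] | /negbT]; rewrite ?negb_and; lia.

Lemma hexw_le j a b : hexw j a b <= j.
Proof.
rewrite /hexw; case: ifP => // /and4P[? ? ? ?].
by rewrite /hexdist !geq_max /natdist; apply/andP; split; [apply/andP; split|]; lia.
Qed.

Lemma hexw_gt0 j a b : 0 < hexw j a b -> in_hexagon j a b.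
Proof. by rewrite /hexw; case: ifP. Qed.

Lemma hexwC j a b : hexw j a b = hexw j b a.
Proof.
rewrite /hexw /hexdist (maxnC (natdist a j)) (_ : 3 * j - a - b = 3 * j - b - a); last by lia.
by congr (if _ then _ else _); apply/and4P/and4P => -[? ? ? ?]; split; lia.
Qed.

Lemma hexw_third j a b : a + b <= 3 * j -> hexw j a b = hexw j a (3 * j - a - b).
Proof.
move=> ab_le; rewrite /hexw /hexdist (_ : 3 * j - a - (3 * j - a - b) = b); last by lia.
rewrite -maxnA (maxnC (natdist b j)) maxnA.
by congr (if _ then _ else _); apply/and4P/and4P => -[? ? ? ?]; split; lia.
Qed.

Lemma hexw_out j a b : 3 * j < a + b -> hexw j a b = 0.
Proof. by rewrite /hexw /in_hexagon ltnNge => /negbTE->. Qed.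

Lemma sum_succ_add n s : 2 * \sum_(0 <= i < n) (i.+1 + s) = n * (n.+1 + 2 * s).
Proof.
elim: n => [|n IH]; first by rewrite big_geq.
rewrite big_nat_recr //= mulnDr IH; lia.
Qed.

Lemma natdist_reflect j x : x <= 2 * j -> natdist (2 * j - x) j = natdist x j.
Proof. rewrite /natdist; lia. Qed.

Lemma hexw_reflect j a b :
  a <= 2 * j -> b <= 2 * j -> hexw j (2 * j - a) (2 * j - b) = hexw j a b.
Proof.
move=> ha hb; rewrite /hexw.
have -> : in_hexagon j (2 * j - a) (2 * j - b) = in_hexagon j a b.
  by apply/and4P/and4P => -[? ? ? ?]; split; lia.
case: ifP => // /and4P[? ? ? ?]; rewrite /hexdist.
have -> : 3 * j - (2 * j - a) - (2 * j - b) = 2 * j - (3 * j - a - b) by lia.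
by rewrite !natdist_reflect //; lia.
Qed.

(* Along the row [b = j + s] the weight is [j - a] for [a < j - s], then [s] up
   to [a = j], then [a + s - j] up to the edge [a = 2j - s] of the hexagon. *)
Lemma hexw_row_upper j s : s <= j -> \sum_(0 <= a < (2 * j).+1) hexw j a (j + s) = j * j.+1.
Proof.
move=> hs; set m := j - s.
rewrite (@big_cat_nat _ _ _ m) /=; [|lia|lia].
rewrite (@big_cat_nat _ _ _ j.+1 m) /=; [|lia|lia].
rewrite (@big_cat_nat _ _ _ (2 * j - s).+1 j.+1) /=; [|lia|lia].
have left : 2 * \sum_(0 <= a < m) hexw j a (j + s) = m * (m.+1 + 2 * s).
  rewrite -sum_succ_add big_nat_rev /= add0n; congr (2 * _).
  by apply: eq_big_nat => a /andP[_ ?]; hexw_lia.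
have middle : \sum_(m <= a < j.+1) hexw j a (j + s) = s.+1 * s.
  rewrite (eq_big_nat _ _ (F2 := fun=> s)) => [|a /andP[? ?]]; last by hexw_lia.
  by rewrite sum_nat_const_nat; congr (_ * _); lia.
have right : 2 * \sum_(j.+1 <= a < (2 * j - s).+1) hexw j a (j + s) = m * (m.+1 + 2 * s).
  rewrite -sum_succ_add -(add0n j.+1) big_addn.
  have -> : (2 * j - s).+1 - j.+1 = m by lia.
  by congr (2 * _); apply: eq_big_nat => a /andP[_ ?]; hexw_lia.
have tail : \sum_((2 * j - s).+1 <= a < (2 * j).+1) hexw j a (j + s) = 0.
  by rewrite big_nat_cond big1 // => a /andP[/andP[? ?] _]; hexw_lia.
rewrite middle tail addn0.
move: left right; rewrite /m; move: (\sum_(0 <= a < _) _) (\sum_(j.+1 <= a < _) _) => x y.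
have [k ->] : exists k, j = s + k by exists (j - s); lia.
have -> : s + k - s = k by lia.
nia.
Qed.

Lemma hexw_row j b : b <= 2 * j -> \sum_(0 <= a < (2 * j).+1) hexw j a b = j * j.+1.
Proof.
move=> hb; have [hjb | hbj] := leqP j b.
  by rewrite -(subnKC hjb) hexw_row_upper // leq_subLR; lia.
rewrite big_nat_rev /= add0n -(@hexw_row_upper j (j - b)); last exact: leq_subr.
apply: eq_big_nat => a /andP[_ ha].
have -> : j + (j - b) = 2 * j - b by lia.
rewrite -hexw_reflect; [congr hexw; lia | lia | lia].
Qed.

Lemma hexw_row_le j b : \sum_(0 <= a < (2 * j).+1) hexw j a b <= j * j.+1.
Proof.
have [hb | hb] := leqP b (2 * j); first by rewrite hexw_row.
by rewrite big1_seq // => a _; hexw_lia.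
Qed.

Lemma card_spaced_le (T : finType) (S : {set T}) (k : T -> nat) m :
  {in S, forall p, k p <= 2 * m} ->
  {in S &, forall p q, p != q -> 2 <= natdist (k p) (k q)} ->
  #|S| <= m.+1.
Proof.
move=> hk hgap; rewrite -[m.+1]card_ord.
apply: (@leq_card_in _ _ (fun p => inord (k p %/ 2))) => p q hp hq /(congr1 val) /=.
have kp := hk p hp; have kq := hk q hq.
rewrite !inordK; [|lia|lia] => e.
by have [// | /(hgap p q hp hq)] := eqVneq p q; rewrite /natdist; lia.
Qed.

Lemma leq_sum_unique (I : finType) (P : pred I) (F : I -> nat) c :
  (forall i i', P i -> P i' -> i = i') -> (forall i, P i -> F i <= c) ->
  \sum_(i | P i) F i <= c.
Proof.
move=> P_uniq F_le; have [i0 Pi0 | noP] := pickP P; last by rewrite big_pred0.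
rewrite (bigD1 i0) //= big1 ?addn0 => [|i /andP[Pi]]; first exact: F_le Pi0.
by rewrite (P_uniq _ _ Pi Pi0) eqxx.
Qed.

Section HexagonLines.
Variable j : nat.
Local Notation N := (2 * j).+1.
Local Notation P := ('I_N * 'I_N)%type.

Lemma hexw_total : \sum_(p : P) hexw j p.1 p.2 = N * (j * j.+1).
Proof.
rewrite -(pair_big xpredT xpredT (fun a b : 'I_N => hexw j a b)) exchange_big /=.
rewrite (eq_bigr (fun=> j * j.+1)) ?sum_nat_const ?card_ord // => b _.
by rewrite -(big_mkord xpredT (hexw j ^~ b)) hexw_row // -ltnS.
Qed.

Lemma hexw_line_le_of_unique (Q : nat -> nat -> bool) t :
  (forall a b b', Q a b -> Q a b' -> b = b') ->
  (forall a b, Q a b -> hexw j a b <= hexw j a t) ->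
  \sum_(p : P | Q p.1 p.2) hexw j p.1 p.2 <= j * j.+1.
Proof.
move=> Q_uniq hexw_le_t.
rewrite -(pair_big_dep xpredT (fun a b : 'I_N => Q a b) (fun a b : 'I_N => hexw j a b)) /=.
apply: leq_trans (hexw_row_le j t); rewrite big_mkord; apply: leq_sum => a _.
apply: leq_sum_unique => [b b' Qb Qb' | b]; last exact: hexw_le_t.
exact/val_inj/(Q_uniq a).
Qed.

Lemma hexw_row_line_le (b0 : nat) : \sum_(p : P | p.2 == b0 :> nat) hexw j p.1 p.2 <= j * j.+1.
Proof.
by apply: (@hexw_line_le_of_unique (fun _ b => b == b0) b0) => [a b b' /eqP-> /eqP->| a b /eqP->].
Qed.

Lemma hexw_col_line_le (a0 : nat) : \sum_(p : P | p.1 == a0 :> nat) hexw j p.1 p.2 <= j * j.+1.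
Proof.
have swap_inj : injective (fun p : P => (p.2, p.1)) by move=> [? ?] [? ?] [-> ->].
rewrite (reindex_inj swap_inj) /=; under eq_bigr do rewrite hexwC.
exact: hexw_row_line_le.
Qed.

Lemma hexw_antidiag_line_le (m : nat) :
  \sum_(p : P | p.1 + p.2 == m) hexw j p.1 p.2 <= j * j.+1.
Proof.
apply: (@hexw_line_le_of_unique (fun a b => a + b == m) (3 * j - m)) => [a b b' | a b /eqP <-].
  by move=> /eqP ? /eqP ?; lia.
have [hab | hab] := leqP (a + b) (3 * j); first by rewrite hexw_third // subnDA.
by rewrite hexw_out.
Qed.

End HexagonLines.

Local Open Scope ring_scope.

Lemma lattice_relation_norm_ge2 (R : realFieldType) (x y : R) (u v : int) :
  x * u%:~R + y * v%:~R = 0 -> x != 0 -> y != 0 -> x != y -> (u != 0) || (v != 0) ->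
  `|x| <= `|y| -> `|x - y| <= `|y| -> 2 <= `|u|.
Proof.
move=> e hx hy hxy huv hxy1 hxy2.
have yv : y * v%:~R = - (x * u%:~R) by apply/eqP; rewrite -addr_eq0 addrC e.
have hu : u != 0.
  apply: contraTneq huv => u0; move: yv; rewrite u0 mulr0 oppr0 => /eqP.
  by rewrite mulf_eq0 (negbTE hy) intr_eq0 => /eqP ->; rewrite eqxx.
have hv : v != 0.
  by apply: contraNneq hu => v0; move: yv; rewrite v0 mulr0 => /esym/eqP;
     rewrite oppr_eq0 mulf_eq0 (negbTE hx) intr_eq0.
have huv' : u + v != 0.
  apply: contraNneq hxy => /eqP; rewrite addr_eq0 => /eqP vE; apply/eqP.
  by apply: (mulIf (x := u%:~R)); rewrite ?intr_eq0 // -[x * _]opprK -yv vE intrN mulrN.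
have ypos : 0 < `|y| by rewrite normr_gt0.
have unorm : 0 < `|u|%:~R :> R by rewrite ltr0z normr_gt0.
have lv : `|v| <= `|u|.
  rewrite -(ler_int R) -(ler_pM2l ypos) !intr_norm -normrM yv normrN normrM.
  by rewrite ler_pM2r // -intr_norm.
have luv : `|u + v| <= `|u|.
  rewrite -(ler_int R) -(ler_pM2l ypos) !intr_norm -normrM intrD mulrDr yv.
  by rewrite -mulNr -mulrDl normrM -intr_norm ler_pM2r // distrC.
by move: hu hv huv' lv luv; lia.
Qed.

Lemma lattice_relation_gap (R : realFieldType) (x y : R) :
  x != 0 -> y != 0 -> x != y ->
  let rel (u v : int) := (x * u%:~R + y * v%:~R == 0) && ((u != 0) || (v != 0)) in
  [\/ forall u v, rel u v -> 2 <= `|u|,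
      forall u v, rel u v -> 2 <= `|v|
    | forall u v, rel u v -> 2 <= `|u + v|].
Proof.
move=> hx hy hxy rel.
have gap_sum : `|x| <= `|x - y| -> `|y| <= `|x - y| -> forall u v, rel u v -> 2 <= `|u + v|.
  move=> hxz hyz u v /andP[/eqP e huv]; rewrite -normrN.
  apply: (@lattice_relation_norm_ge2 R (- x) (y - x) _ v).
  - by rewrite -e intrN intrD; ring.
  - by rewrite oppr_eq0.
  - by rewrite subr_eq0 eq_sym.
  - by apply: contra hy => /eqP e'; apply/eqP; rewrite -[y](subrK x) -e'; ring.
  - by move: huv; lia.
  - by rewrite normrN distrC.
  - by rewrite (_ : - x - (y - x) = - y) ?normrN ?(distrC y) //; ring.
have [hxy1 | hyx1] := lerP `|x| `|y|.
  have [hxy2 | hxy2] := lerP `|x - y| `|y|; last first.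
    by apply: Or33; apply: gap_sum; rewrite ltW // (le_lt_trans hxy1).
  apply: Or31 => u v /andP[/eqP e huv].
  exact: lattice_relation_norm_ge2 e hx hy hxy huv hxy1 hxy2.
have [hyx2 | hyx2] := lerP `|x - y| `|x|; last first.
  by apply: Or33; apply: gap_sum; rewrite ltW // (lt_trans hyx1).
apply: Or32 => u v /andP[/eqP e huv].
apply: (@lattice_relation_norm_ge2 R y x v u).
- by rewrite addrC.
- exact: hy.
- exact: hx.
- by rewrite eq_sym.
- by rewrite orbC.
- exact: ltW.
- by rewrite distrC.
Qed.

Section HexagonGenericLine.
Variables (R : realFieldType) (j : nat).
Local Notation N := (2 * j).+1.
Local Notation P := ('I_N * 'I_N)%type.

Lemma hexw_generic_line_le (a0 a1 g : R) : a0 != 0 -> a1 != 0 -> a0 != a1 ->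
  (\sum_(p : P | (a0 * (p.1 : nat)%:R + a1 * (p.2 : nat)%:R == g)%R) hexw j p.1 p.2
    <= j * j.+1)%N.
Proof.
move=> a0_neq0 a1_neq0 a0_neq_a1.
set line := fun p : P => a0 * (p.1 : nat)%:R + a1 * (p.2 : nat)%:R == g.
set S := [set p : P | line p && (0 < hexw j p.1 p.2)%N].
have -> : \sum_(p | line p) hexw j p.1 p.2 = \sum_(p in S) hexw j p.1 p.2.
  rewrite big_mkcond [RHS]big_mkcond; apply: eq_bigr => p _; rewrite inE.
  by case: (line p); case: posnP.
apply: (@leq_trans (\sum_(p in S) j)); first by apply: leq_sum => p _; exact: hexw_le.
rewrite sum_nat_const mulnC leq_mul2l; apply/orP; right.
have S_hex p : p \in S -> in_hexagon j p.1 p.2 by rewrite inE => /andP[_ /hexw_gt0].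
have S_rel p q : p \in S -> q \in S -> p != q ->
    (a0 * ((p.1 : nat)%:Z - (q.1 : nat)%:Z)%:~R
       + a1 * ((p.2 : nat)%:Z - (q.2 : nat)%:Z)%:~R == 0)
    && (((p.1 : nat)%:Z - (q.1 : nat)%:Z != 0) || ((p.2 : nat)%:Z - (q.2 : nat)%:Z != 0)).
  rewrite !inE => /andP[/eqP line_p _] /andP[/eqP line_q _] p_neq_q.
  apply/andP; split.
    by rewrite !intrB -!pmulrn !mulrBr addrACA line_p -opprD line_q subrr.
  rewrite -negb_and; apply: contra p_neq_q => /andP[/eqP e1 /eqP e2].
  apply/eqP; case: p q {line_p line_q} e1 e2 => [p1 p2] [q1 q2] /= e1 e2.
  have -> : p1 = q1 by apply: ord_inj; lia.
  by have -> : p2 = q2 by apply: ord_inj; lia.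
have [gap | gap | gap] := lattice_relation_gap a0_neq0 a1_neq0 a0_neq_a1.
- apply: (@card_spaced_le _ S (fun p => p.1 : nat)) => [p _ | p q hp hq p_neq_q].
    by rewrite -ltnS ltn_ord.
  by have := gap _ _ (S_rel p q hp hq p_neq_q); rewrite /natdist; lia.
- apply: (@card_spaced_le _ S (fun p => p.2 : nat)) => [p _ | p q hp hq p_neq_q].
    by rewrite -ltnS ltn_ord.
  by have := gap _ _ (S_rel p q hp hq p_neq_q); rewrite /natdist; lia.
- apply: (@card_spaced_le _ S (fun p => 3 * j - p.1 - p.2)%N) => [p hp | p q hp hq p_neq_q].
    by move/S_hex: hp => /and4P[? ? ? ?]; lia.
  move/S_hex: (hp) => /and4P[? ? ? ?]; move/S_hex: (hq) => /and4P[? ? ? ?].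
  by have := gap _ _ (S_rel p q hp hq p_neq_q); rewrite /natdist; lia.
Qed.

End HexagonGenericLine.

Lemma cover_weight_ge_packing (R : realType) (d n : nat) (I : finType)
    (pt : I -> 'I_d -> nat) (w : I -> R) (s : seq ('rV[R]_d * R * R)) :
  (forall i, 0 <= w i) ->
  (forall i, 0 < w i -> in_Tdn n (pt i)) ->
  (forall h : 'rV[R]_d * R, h.1 != 0 -> \sum_(i | on_hyp h (grid_pt R (pt i))) w i <= 1) ->
  frac_cover n s -> \sum_i w i <= cover_weight s.
Proof.
move=> w_ge0 w_supp w_line [s_ok s_cov].
pose cov i := \sum_(e <- s | on_hyp e.1 (grid_pt R (pt i))) e.2.
apply: (@le_trans _ _ (\sum_i w i * cov i)).
  apply: ler_sum => i _; have := w_ge0 i; rewrite le0r => /orP[/eqP -> | wpos].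
    by rewrite mul0r.
  exact/ler_peMr/s_cov/w_supp.
have -> : \sum_i w i * cov i = \sum_(e <- s) e.2 * \sum_(i | on_hyp e.1 (grid_pt R (pt i))) w i.
  rewrite (eq_bigr (fun i =>
    \sum_(e <- s) (if on_hyp e.1 (grid_pt R (pt i)) then w i * e.2 else 0))).
    rewrite exchange_big /=; apply: eq_bigr => e _; rewrite mulr_sumr [RHS]big_mkcond.
    by apply: eq_bigr => i _; case: ifP; rewrite // mulrC.
  move=> i _; rewrite /cov mulr_sumr big_mkcond.
  by apply: eq_bigr => e _; case: ifP; rewrite ?mulr0.
rewrite /cover_weight big_seq [X in _ <= X]big_seq; apply: ler_sum => e he.
have [hnz he2] := s_ok e he.
exact: ler_piMr (w_line _ hnz).
Qed.

(* The origin lies in every [T_d(n)], also for [n = 0] since [n - 1] truncates. *)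
Lemma cover_weight_ge1 (R : realType) (d n : nat) (s : seq ('rV[R]_d * R * R)) :
  frac_cover n s -> 1 <= cover_weight s.
Proof.
move=> s_cover; apply: le_trans (_ : \sum_(i < 1) 1 <= _); first by rewrite big_ord1.
apply: (cover_weight_ge_packing (pt := fun _ _ => 0%N)) s_cover => // [_|h _].
  by rewrite /in_Tdn big1.
by rewrite big_mkcond big_ord1; case: ifP.
Qed.

Lemma sum_ord2 (V : nmodType) (F : 'I_2 -> V) : \sum_(i < 2) F i = F ord0 + F ord_max.
Proof. by rewrite big_ord_recr big_ord1; congr (F _ + _); apply: val_inj. Qed.

Section Plane.
Variable R : realType.

Definition pt2 (a b : nat) : 'I_2 -> nat := fun i => if val i == 0%N then a else b.


Lemma on_hyp_grid2 (h : 'rV[R]_2 * R) (p : 'I_2 -> nat) :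
  on_hyp h (grid_pt R p) = (h.1 0 ord0 * (p ord0)%:R + h.1 0 ord_max * (p ord_max)%:R == h.2).
Proof. by rewrite /on_hyp sum_ord2 !mxE. Qed.

Lemma in_Tdn2 (n : nat) (p : 'I_2 -> nat) : in_Tdn n p = (p ord0 + p ord_max <= n - 1)%N.
Proof. by rewrite /in_Tdn sum_ord2. Qed.

Lemma row2_neq0 (v : 'rV[R]_2) : v != 0 -> (v 0 ord0 != 0) || (v 0 ord_max != 0).
Proof.
apply: contraR; rewrite negb_or !negbK => /andP[/eqP v0 /eqP v1].
apply/eqP/rowP => i; rewrite !mxE.
by case: i => -[|[|//]] i_lt; [rewrite -v0 | rewrite -v1]; congr (v 0 _); apply: val_inj.
Qed.

Definition line2 (a0 a1 c : R) : 'rV[R]_2 * R :=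
  (\row_(i < 2) if val i == 0%N then a0 else a1, c).

Lemma on_hyp_line2 a0 a1 c (p : 'I_2 -> nat) :
  on_hyp (line2 a0 a1 c) (grid_pt R p) = (a0 * (p ord0)%:R + a1 * (p ord_max)%:R == c).
Proof. by rewrite on_hyp_grid2 !mxE. Qed.

Lemma line2_neq0 a0 a1 c : (a0 != 0) || (a1 != 0) -> (line2 a0 a1 c).1 != 0.
Proof.
apply: contraTT; rewrite negbK negb_or => /eqP/rowP line0.
by have := line0 ord0; have := line0 ord_max; rewrite !mxE /= => -> ->; rewrite eqxx.
Qed.

End Plane.

Section HexagonPacking.
Variables (R : realType) (j : nat).
Hypothesis j_gt0 : (0 < j)%N.
Local Notation N := (2 * j).+1.
Local Notation P := ('I_N * 'I_N)%type.

Definition hex_packing (p : P) : R := (hexw j p.1 p.2)%:R / (j * j.+1)%:R.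

Lemma hex_packing_ge0 p : 0 <= hex_packing p.
Proof. by rewrite divr_ge0. Qed.

Lemma hex_packing_sum_le1 (Q : pred P) :
  (\sum_(p | Q p) hexw j p.1 p.2 <= j * j.+1)%N -> \sum_(p | Q p) hex_packing p <= 1.
Proof.
move=> hexw_le; rewrite -mulr_suml -natr_sum ler_pdivrMr ?mul1r ?ler_nat //.
by rewrite ltr0n muln_gt0 j_gt0.
Qed.

Lemma hex_packing_total : \sum_(p : P) hex_packing p = N%:R.
Proof.
rewrite -mulr_suml -natr_sum hexw_total natrM mulfK // pnatr_eq0 -lt0n.
by rewrite muln_gt0 j_gt0.
Qed.

Lemma hex_packing_line_le (h : 'rV[R]_2 * R) : h.1 != 0 ->
  \sum_(p : P | on_hyp h (grid_pt R (pt2 p.1 p.2))) hex_packing p <= 1.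
Proof.
move=> h_neq0; apply: hex_packing_sum_le1.
set a0 := h.1 0 ord0; set a1 := h.1 0 ord_max.
under eq_bigl do rewrite on_hyp_grid2 /pt2 /= -/a0 -/a1.
have [p0 /eqP on_p0 | no_point] :=
  pickP (fun p : P => a0 * (p.1 : nat)%:R + a1 * (p.2 : nat)%:R == h.2); last by rewrite big_pred0.
rewrite -on_p0.
have [a1_0 | a1_neq0] := eqVneq a1 0.
  have a0_neq0 : a0 != 0 by have := row2_neq0 h_neq0; rewrite -/a0 -/a1 a1_0 eqxx orbF.
  rewrite (eq_bigl (fun p : P => (p.1 : nat) == p0.1)) ?hexw_col_line_le // => p.
  by rewrite a1_0 !mul0r !addr0 (inj_eq (mulfI a0_neq0)) eqr_nat.
have [a0_0 | a0_neq0] := eqVneq a0 0.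
  rewrite (eq_bigl (fun p : P => (p.2 : nat) == p0.2)) ?hexw_row_line_le // => p.
  by rewrite a0_0 !mul0r !add0r (inj_eq (mulfI a1_neq0)) eqr_nat.
have [a0_a1 | a0_neq_a1] := eqVneq a0 a1; last exact: hexw_generic_line_le.
rewrite (eq_bigl (fun p : P => p.1 + p.2 == p0.1 + p0.2)%N) ?hexw_antidiag_line_le // => p.
by rewrite a0_a1 -!mulrDr (inj_eq (mulfI a1_neq0)) -!natrD eqr_nat.
Qed.

Lemma cover_weight_ge_hexagon (s : seq ('rV[R]_2 * R * R)) :
  frac_cover (3 * j + 1) s -> N%:R <= cover_weight s.
Proof.
move=> s_cover; rewrite -hex_packing_total.
apply: (cover_weight_ge_packing (pt := fun p : P => pt2 p.1 p.2)) s_cover => [p|p|h];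
  [exact: hex_packing_ge0 | | exact: hex_packing_line_le].
rewrite /hex_packing; have [-> | /hexw_gt0/and4P[? ? ? ?] _] := posnP (hexw j p.1 p.2).
  by rewrite mul0r ltxx.
by rewrite in_Tdn2 /pt2 /= addnK.
Qed.

End HexagonPacking.

Lemma sum_iota_pred1 (V : nmodType) (F : nat -> V) (n k : nat) :
  ((n <= k)%N -> F k = 0) -> \sum_(t <- iota 0 n | t == k) F t = F k.
Proof.
move=> Fk0; have [k_lt | k_ge] := ltnP k n.
  by rewrite -big_filter filter_pred1_uniq ?iota_uniq ?mem_iota // big_seq1.
rewrite Fk0 // big_seq_cond big_pred0 // => t.
by rewrite mem_iota; apply/andP => -[/andP[_ ?] /eqP ?]; lia.
Qed.

Lemma sum_sub_iota n : (2 * \sum_(t <- iota 0 n) (n - t) = n * n.+1)%N.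
Proof.
have -> : iota 0 n = index_iota 0 n by rewrite /index_iota subn0.
rewrite big_nat_rev /=; have := sum_succ_add n 0; rewrite muln0 addn0 => <-.
by congr (2 * _)%N; apply: eq_big_nat => i /andP[_ i_lt]; lia.
Qed.

Section TriangleCover.
Variables (R : realType) (j : nat).
Hypothesis j_gt0 : (0 < j)%N.

Definition tri_weight (t : nat) : R := (2 * j - t)%:R / (3 * j)%:R.

Definition tri_cover : seq ('rV[R]_2 * R * R) :=
  [seq (line2 1 0 t%:R, tri_weight t) | t <- iota 0 (2 * j)] ++
  [seq (line2 0 1 t%:R, tri_weight t) | t <- iota 0 (2 * j)] ++
  [seq (line2 1 1 (3 * j - t)%:R, tri_weight t) | t <- iota 0 (2 * j)].

Lemma tri_weight_ge0 t : 0 <= tri_weight t.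
Proof. by rewrite divr_ge0. Qed.

Lemma tri_weight_sum : \sum_(t <- iota 0 (2 * j)) tri_weight t = (j * (2 * j).+1)%:R / (3 * j)%:R.
Proof.
rewrite -mulr_suml -natr_sum; congr (_%:R / _).
by apply/eqP; rewrite -(@eqn_pmul2l 2) // mulnA (mulnC 2 j) -mulnA sum_sub_iota; lia.
Qed.

Lemma tri_weight_eq0 t : (2 * j <= t)%N -> tri_weight t = 0.
Proof. by rewrite -subn_eq0 /tri_weight => /eqP->; rewrite mul0r. Qed.

Lemma tri_weight_coords_ge1 a b : (a + b <= 3 * j)%N ->
  1 <= tri_weight a + tri_weight b + tri_weight (3 * j - (a + b)).
Proof.
move=> ab_le; rewrite /tri_weight -!mulrDl -!natrD ler_pdivlMr ?mul1r ?ler_nat; first lia.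
by rewrite ltr0n; lia.
Qed.

Lemma tri_cover_frac_cover : frac_cover (3 * j + 1) tri_cover.
Proof.
split.
  move=> e; rewrite !mem_cat => /or3P[] /mapP[t _ ->];
    by split; rewrite ?tri_weight_ge0 // line2_neq0 // oner_neq0 ?orbT.
move=> p; rewrite in_Tdn2 addnK => ab_le.
rewrite /tri_cover !big_cat !big_map /= addrA.
rewrite (eq_bigl (fun t => t == p ord0)) => [|t]; last first.
  by rewrite on_hyp_line2 mul1r mul0r addr0 eqr_nat eq_sym.
rewrite [X in _ + X + _](eq_bigl (fun t => t == p ord_max)) => [|t]; last first.
  by rewrite on_hyp_line2 mul1r mul0r add0r eqr_nat eq_sym.
set c := (3 * j - (p ord0 + p ord_max))%N.
have third : \sum_(t <- iota 0 (2 * j) | on_hyp (line2 1 1 (3 * j - t)%:R) (grid_pt R p))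
    tri_weight t = \sum_(t <- iota 0 (2 * j) | t == c) tri_weight t.
  rewrite big_seq_cond [RHS]big_seq_cond; apply: eq_bigl => t.
  rewrite on_hyp_line2 !mul1r -natrD eqr_nat mem_iota.
  by case: (ltnP t (2 * j)) => t_lt; rewrite ?andbF //=; apply/eqP/eqP; lia.
rewrite third !sum_iota_pred1 //; try exact: tri_weight_eq0.
exact: tri_weight_coords_ge1.
Qed.

Lemma tri_cover_weight : cover_weight tri_cover = (2 * j + 1)%:R.
Proof.
rewrite /cover_weight /tri_cover !big_cat !big_map /= tri_weight_sum.
have j_neq0 : j%:R != 0 :> R by rewrite pnatr_eq0 -lt0n.
by rewrite !natrM natrD natrM -addn1 natrD; field.
Qed.

End TriangleCover.

Lemma origin_frac_cover (R : realType) : frac_cover 1 [:: (line2 1 0 (0 : R), 1)].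
Proof.
split=> [e | p].
  by rewrite inE => /eqP->; split; [apply: line2_neq0; rewrite oner_neq0 | exact: ler01].
rewrite in_Tdn2 leqn0 addn_eq0 => /andP[/eqP p0 _].
by rewrite big_cons big_nil on_hyp_line2 p0 mul1r mul0r !addr0 eqxx.
Qed.

Theorem mainTheorem1 (R : realType) (j : nat) :
  is_fstar (3 * j + 1)%N 2 ((2 * j + 1)%N%:R : R).
Proof.
have [-> | j_gt0] := posnP j.
  split; last by move=> s; apply: cover_weight_ge1.
  exists [:: (line2 1 0 0, 1)]; split; first exact: origin_frac_cover.
  by rewrite /cover_weight big_seq1.
split.
  by exists (tri_cover R j); split; [exact: tri_cover_frac_cover | exact: tri_cover_weight].
by move=> s /(cover_weight_ge_hexagon j_gt0); rewrite addn1.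
Qed.
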